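(* Let $G$ be a (possibly infinite) cyclic graph with vertex set $V$. For every $v\in V$, \[ \mathrm{wf}(G)=\lim_{m\to\infty}\frac{\gamma_m(v)}{m}. \]
   Context: $S^1=\mathbb{R}/\mathbb{Z}$; $\preceq$/$\prec$ denote clockwise cyclic order; $\vec d(p,q)\in[0,1)$ is the clockwise distance from $p$ to $q$. A directed graph has no loops and no pair of opposite edges; $N^+[G,v]=\{v\}\cup\{w:v\to w\}$. A directed graph with vertex set $V\subseteq S^1$ is cyclic if whenever $v\to u$ is an edge, $v\to w$ and $w\to u$ are edges for all $w\in V$ with $v\prec w\prec u\prec v$. For $0\le k<n/2$, $C_n^k$ is the cyclic graph on $\{0,\dots,n-1\}$ with edges $i\to i+s\bmod n$, $1\le s\le k$. A cyclic homomorphism is a directed-graph homomorphism (edges map to edges or collapse) weakly preserving cyclic order and non-constant when the domain has a directed cycle. For finite cyclic $G$, $\mathrm{wf}(G)=\sup\{k/n:\exists$ cyclic homomorphism $C_n^k\to G\}$; for arbitrary cyclic $G$, $\mathrm{wf}(G)=\sup\{\mathrm{wf}(G[W]):W\subseteq V$ finite$\}$. For $m\ge1$ and $v_0\in V$, $\gamma_m(v_0)=\sup\{\sum_{i=0}^{m-1}\vec d(v_i,v_{i+1}) : v_1,\dots,v_m\in V,\ v_{i+1}\in N^+[G,v_i]\}$ (the supremum of total clockwise length of length-$m$ directed walks from $v_0$, where staying put is allowed). *)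

From Stdlib Require Import Reals Lra.
Open Scope R_scope.

(* S^1 = R/Z is represented by the representatives in [0,1). *)
Definition in_S1 (x : R) : Prop := 0 <= x < 1.

(* clockwise distance d(p,q) in [0,1) ; clockwise = increasing representative mod 1 *)
Definition cwd (p q : R) : R := if Rle_dec p q then q - p else q - p + 1.

(* strict cyclic order  a < b < c < a  (clockwise, all distinct) *)
Definition scyc (a b c : R) : Prop := 0 < cwd a b /\ cwd a b < cwd a c.

Definition wcyc (a b c : R) : Prop := a = b \/ b = c \/ c = a \/ scyc a b c.

Definition is_digraph (V : R -> Prop) (E : R -> R -> Prop) : Prop :=
  (forall x, V x -> in_S1 x) /\
  (forall u v, E u v -> V u /\ V v) /\
  (forall v, ~ E v v) /\
  (forall u v, E u v -> ~ E v u).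

Definition is_cyclic (V : R -> Prop) (E : R -> R -> Prop) : Prop :=
  is_digraph V E /\
  forall v u w, E v u -> V w -> scyc v w u -> E v w /\ E w u.

Definition has_dicycle (V : R -> Prop) (E : R -> R -> Prop) : Prop :=
  exists (c : nat -> R) (l : nat), (0 < l)%nat /\
    (forall i, c (i + l)%nat = c i) /\ (forall i, V (c i) /\ E (c i) (c (S i))).

Definition CV (n : nat) (x : R) : Prop :=
  exists i : nat, (i < n)%nat /\ x = INR i / INR n.
Definition CE (n k : nat) (x y : R) : Prop :=
  exists i s : nat, (i < n)%nat /\ (1 <= s <= k)%nat /\
    x = INR i / INR n /\ y = INR ((i + s) mod n) / INR n.

Definition cyclic_hom (V1 : R -> Prop) (E1 : R -> R -> Prop)
    (V2 : R -> Prop) (E2 : R -> R -> Prop) (f : R -> R) : Prop :=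
  (forall x, V1 x -> V2 (f x)) /\
  (forall x y, E1 x y -> f x = f y \/ E2 (f x) (f y)) /\
  (forall a b c, V1 a -> V1 b -> V1 c -> wcyc a b c -> wcyc (f a) (f b) (f c)) /\
  (has_dicycle V1 E1 -> exists x y, V1 x /\ V1 y /\ f x <> f y).

Definition ind_V (V W : R -> Prop) (x : R) : Prop := V x /\ W x.
Definition ind_E (E : R -> R -> Prop) (W : R -> Prop) (x y : R) : Prop :=
  E x y /\ W x /\ W y.

Definition finite_set (W : R -> Prop) : Prop :=
  exists l : list R, forall x, W x -> List.In x l.

Definition wf_fin_set (V : R -> Prop) (E : R -> R -> Prop) (r : R) : Prop :=
  exists n k : nat, (2 * k < n)%nat /\ r = INR k / INR n /\
    exists f, cyclic_hom (CV n) (CE n k) V E f.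

Definition is_wf_fin (V : R -> Prop) (E : R -> R -> Prop) (w : R) : Prop :=
  is_lub (wf_fin_set V E) w.

Definition wf_set (V : R -> Prop) (E : R -> R -> Prop) (r : R) : Prop :=
  exists W : R -> Prop, (forall x, W x -> V x) /\ finite_set W /\
    is_wf_fin (ind_V V W) (ind_E E W) r.

Definition is_wf (V : R -> Prop) (E : R -> R -> Prop) (w : R) : Prop :=
  is_lub (wf_set V E) w.

Fixpoint rsum (f : nat -> R) (n : nat) : R :=
  match n with O => 0 | S n' => rsum f n' + f n' end.

Definition walk_len_set (V : R -> Prop) (E : R -> R -> Prop) (m : nat) (v0 : R)
    (r : R) : Prop :=
  exists c : nat -> R, c O = v0 /\
    (forall i, (i < m)%nat -> V (c (S i)) /\ (c (S i) = c i \/ E (c i) (c (S i)))) /\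
    r = rsum (fun i => cwd (c i) (c (S i))) m.

Definition is_gamma (V : R -> Prop) (E : R -> R -> Prop) (m : nat) (v0 : R)
    (g : R) : Prop :=
  is_lub (walk_len_set V E m v0) g.

From Stdlib Require Import Reals Lra Lia Psatz ZArith Classical List.
Open Scope R_scope.

(* A walk from any vertex can be shadowed from v
   by a walk that stays less than one turn behind it: whenever the shadow would
   fall a full turn behind, cyclicity provides an edge to the leader's position.
   Hence gamma is superadditive and subadditive up to the constant 1, and it
   suffices to show (gamma q - 1) / q <= wf(G) <= (gamma q + 1) / q.

   A homomorphism C_n^k -> G yields an n-periodic vertex sequence whose chords
   of span <= k are edges; jumping k steps at a time never completes a turn in
   one jump but winds at least once per period, so walks of length q n reach
   total length q k, whence k/n <= (gamma q + 1) / q.  Conversely, if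
   k/n < (gamma q - 1) / q, a long nearly optimal walk advances faster than
   slope k/n, and its positions, lowered by floor((a k - j) / n) turns and
   minimised over the time a, define a homomorphism C_n^k -> G. *)

(** * Lifts of points of the circle *)

Definition is_lift (x X : R) : Prop := exists k : Z, X = x + IZR k.

Lemma cwd_cases x y :
  (x <= y /\ cwd x y = y - x) \/ (y < x /\ cwd x y = y - x + 1).
Proof. unfold cwd; destruct (Rle_dec x y); [left | right]; split; lra. Qed.

Lemma cwd_bounds x y : in_S1 x -> in_S1 y -> 0 <= cwd x y < 1.
Proof. unfold in_S1; intros; destruct (cwd_cases x y) as [[? ->] | [? ->]]; lra. Qed.

Lemma cwd_xx x : cwd x x = 0.
Proof. unfold cwd; destruct (Rle_dec x x); lra. Qed.

Lemma is_lift_refl x : is_lift x x.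
Proof. exists 0%Z; simpl; ring. Qed.

Lemma is_lift_addZ x X k : is_lift x X -> is_lift x (X + IZR k).
Proof. intros [m ->]; exists (m + k)%Z; rewrite plus_IZR; ring. Qed.

Lemma is_lift_add_cwd x y X : is_lift x X -> is_lift y (X + cwd x y).
Proof.
  intros [k ->]; destruct (cwd_cases x y) as [[_ ->] | [_ ->]].
  - exists k; ring.
  - exists (k + 1)%Z; rewrite plus_IZR; simpl; ring.
Qed.

Lemma Z_eq_of_IZR_near k m : IZR m - 1 < IZR k < IZR m + 1 -> k = m.
Proof.
  intros [h1 h2].
  assert (IZR (m - 1) < IZR k) as a1 by (rewrite minus_IZR; simpl; lra).
  assert (IZR k < IZR (m + 1)) as a2 by (rewrite plus_IZR; simpl; lra).
  apply lt_IZR in a1; apply lt_IZR in a2; lia.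
Qed.

Section Lifts.

Variables x y X Y : R.
Hypotheses (x_S1 : in_S1 x) (y_S1 : in_S1 y) (xX : is_lift x X) (yY : is_lift y Y).

Lemma cwd_of_lifts : 0 <= Y - X < 1 -> cwd x y = Y - X.
Proof.
  unfold in_S1 in *; destruct xX as [a ->], yY as [b ->]; intros h.
  destruct (cwd_cases x y) as [[h1 ->] | [h1 ->]].
  - assert (b - a = 0)%Z as e by (apply Z_eq_of_IZR_near; rewrite minus_IZR; simpl; lra).
    assert (IZR b = IZR a) by (f_equal; lia); lra.
  - assert (b - a = 1)%Z as e by (apply Z_eq_of_IZR_near; rewrite minus_IZR; simpl; lra).
    assert (IZR b = IZR a + 1) by (replace b with (a + 1)%Z by lia; rewrite plus_IZR; simpl; lra).
    lra.
Qed.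

Lemma eq_of_lifts_diffZ k : Y - X = IZR k -> x = y.
Proof.
  unfold in_S1 in *; destruct xX as [a ->], yY as [b ->]; intros h.
  assert (k - b + a = 0)%Z as e
    by (apply Z_eq_of_IZR_near; rewrite plus_IZR, minus_IZR; simpl; lra).
  assert (IZR k = IZR b - IZR a) by (rewrite <- minus_IZR; f_equal; lia); lra.
Qed.

Lemma eq_of_lifts_eq : Y = X -> x = y.
Proof. intros; apply (eq_of_lifts_diffZ 0); simpl; lra. Qed.

Lemma eq_of_lifts_succ : Y = X + 1 -> x = y.
Proof. intros; apply (eq_of_lifts_diffZ 1); simpl; lra. Qed.

Lemma neq_of_lifts : 0 < Y - X < 1 -> x <> y.
Proof.
  intros h e.
  assert (cwd x y = Y - X) as d by (apply cwd_of_lifts; lra).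
  rewrite e, cwd_xx in d; lra.
Qed.

End Lifts.

Lemma lifts_eq x X Y : in_S1 x -> is_lift x X -> is_lift x Y -> 0 <= Y - X < 1 -> Y = X.
Proof.
  intros hx hX hY h.
  pose proof (cwd_of_lifts x x X Y hx hx hX hY h); rewrite cwd_xx in *; lra.
Qed.

Section CyclicOrderOfLifts.

Variables (a b c A B C : R).
Hypotheses (a_S1 : in_S1 a) (b_S1 : in_S1 b) (c_S1 : in_S1 c).
Hypotheses (aA : is_lift a A) (bB : is_lift b B) (cC : is_lift c C).

Lemma scyc_of_lifts : A < B -> B < C -> C < A + 1 -> scyc a b c.
Proof. intros; unfold scyc; rewrite (cwd_of_lifts a b A B), (cwd_of_lifts a c A C); auto; lra. Qed.

Lemma wcyc_of_lifts : A <= B -> B <= C -> C <= A + 1 -> wcyc a b c.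
Proof.
  intros; unfold wcyc.
  destruct (Req_dec A B). { left; apply (eq_of_lifts_eq a b A B); auto. }
  destruct (Req_dec B C). { right; left; apply (eq_of_lifts_eq b c B C); auto. }
  destruct (Req_dec C (A + 1)).
  { right; right; left; symmetry; apply (eq_of_lifts_succ a c A C); auto. }
  right; right; right; apply scyc_of_lifts; lra.
Qed.

End CyclicOrderOfLifts.

Definition unwind (h : nat -> R) (i : nat) : R :=
  h O + rsum (fun j => cwd (h j) (h (S j))) i.

Lemma unwind_S h i : unwind h (S i) = unwind h i + cwd (h i) (h (S i)).
Proof. unfold unwind; simpl; ring. Qed.

Lemma unwind_lift h i : is_lift (h i) (unwind h i).
Proof.
  induction i; [unfold unwind; simpl; rewrite Rplus_0_r; apply is_lift_refl |].
  rewrite unwind_S; apply is_lift_add_cwd; auto.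
Qed.

Lemma is_lub_ub S g x : is_lub S g -> S x -> x <= g.
Proof. intros [h _] hx; apply h; auto. Qed.

Lemma is_lub_le S g b : is_lub S g -> (forall x, S x -> x <= b) -> g <= b.
Proof. intros [_ h] hb; apply h; intros x hx; auto. Qed.

Lemma is_lub_approx S g eps : is_lub S g -> 0 < eps -> exists x, S x /\ g - eps < x.
Proof.
  intros hl he; apply NNPP; intro hn.
  assert (g <= g - eps); [| lra].
  apply (is_lub_le S g); auto; intros x hx.
  destruct (Rle_lt_dec x (g - eps)); auto; exfalso; eauto.
Qed.

Lemma mod_add_same i n : ((i + n) mod n = i mod n)%nat.
Proof. replace (i + n)%nat with (i + 1 * n)%nat by lia; apply Nat.Div0.mod_add. Qed.

Lemma grid_point_CV n i : (0 < n)%nat -> CV n (INR (i mod n) / INR n).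
Proof. intros hn; exists (i mod n)%nat; split; auto; apply Nat.mod_upper_bound; lia. Qed.

Lemma C_has_dicycle n k : (1 <= k)%nat -> (0 < n)%nat -> has_dicycle (CV n) (CE n k).
Proof.
  intros hk hn; exists (fun i => INR (i mod n) / INR n), n; split; auto; split.
  - intros i; rewrite mod_add_same; auto.
  - intros i; split; [apply grid_point_CV; auto |].
    exists (i mod n)%nat, 1%nat; split; [apply Nat.mod_upper_bound; lia | split; [lia | split; auto]].
    rewrite Nat.Div0.add_mod_idemp_l; replace (i + 1)%nat with (S i) by lia; auto.
Qed.

Fixpoint min_upto (f : nat -> R) (A : nat) : R :=
  match A with O => f O | S A' => Rmin (min_upto f A') (f (S A')) end.

Lemma min_upto_le f A a : (a <= A)%nat -> min_upto f A <= f a.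
Proof.
  induction A; intros h; simpl; [replace a with O by lia; lra |].
  destruct (Nat.eq_dec a (S A)) as [-> | ne]; [apply Rmin_r |].
  eapply Rle_trans; [apply Rmin_l | apply IHA; lia].
Qed.

Lemma min_upto_attained f A : exists a, (a <= A)%nat /\ min_upto f A = f a.
Proof.
  induction A; simpl; [exists O; auto |].
  destruct IHA as (a & ha & e); unfold Rmin; destruct (Rle_dec (min_upto f A) (f (S A))).
  - exists a; auto.
  - exists (S A); auto.
Qed.

Lemma min_upto_mono f g A : (forall a, f a <= g a) -> min_upto f A <= min_upto g A.
Proof.
  intros h; induction A; simpl; auto.
  pose proof (h (S A)); unfold Rmin.
  destruct (Rle_dec (min_upto f A) (f (S A))), (Rle_dec (min_upto g A) (g (S A))); lra.
Qed.

Lemma min_upto_succ f g A : (forall a, g a = f a + 1) -> min_upto g A = min_upto f A + 1.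
Proof.
  intros h; induction A; simpl; auto.
  rewrite IHA, h; unfold Rmin.
  destruct (Rle_dec (min_upto f A + 1) (f (S A) + 1)), (Rle_dec (min_upto f A) (f (S A))); lra.
Qed.

Lemma Zdiv_bounds x n : (0 < n)%nat ->
  IZR (x / Z.of_nat n) <= IZR x / INR n < IZR (x / Z.of_nat n) + 1.
Proof.
  intros hn.
  pose proof (Z.div_mod x (Z.of_nat n) ltac:(lia)) as e.
  pose proof (Z.mod_pos_bound x (Z.of_nat n) ltac:(lia)) as [b1 b2].
  set (q := (x / Z.of_nat n)%Z) in *; set (r := (x mod Z.of_nat n)%Z) in *.
  assert (IZR x = INR n * IZR q + IZR r) as ex
    by (rewrite e, plus_IZR, mult_IZR, INR_IZR_INZ; auto).
  apply IZR_le in b1; apply IZR_lt in b2; rewrite <- INR_IZR_INZ in b2.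
  assert (0 < INR n) by (apply lt_0_INR; lia).
  rewrite ex; split; apply (Rmult_le_reg_r (INR n)) || apply (Rmult_lt_reg_r (INR n)); auto;
    unfold Rdiv; rewrite Rmult_assoc, Rinv_l by lra; nra.
Qed.

Definition frac (y : R) : R := y - IZR (Int_part y).

Lemma Int_part_IZR z : Int_part (IZR z) = z.
Proof. destruct (base_Int_part (IZR z)); apply Z_eq_of_IZR_near; lra. Qed.

Lemma frac_of_lift x X : in_S1 x -> is_lift x X -> frac X = x.
Proof.
  unfold in_S1; intros hx [m ->]; unfold frac.
  replace (Int_part (x + IZR m)) with m; [ring |].
  destruct (base_Int_part (x + IZR m)); symmetry; apply Z_eq_of_IZR_near; lra.
Qed.

Lemma cwd_grid i1 i2 n : (i1 < n)%nat -> (i2 < n)%nat ->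
  cwd (INR i1 / INR n) (INR i2 / INR n) =
  (INR (if Nat.leb i1 i2 then i2 else i2 + n) - INR i1) / INR n.
Proof.
  intros h1 h2; assert (0 < INR n) as hn by (apply lt_0_INR; lia).
  unfold cwd; destruct (Nat.leb_spec i1 i2) as [l | l];
    destruct (Rle_dec (INR i1 / INR n) (INR i2 / INR n)) as [r | r].
  - field; lra.
  - exfalso; apply r, Rmult_le_compat_r; [left; apply Rinv_0_lt_compat | apply le_INR]; auto.
  - exfalso; apply lt_INR in l.
    assert (INR i2 / INR n < INR i1 / INR n); [| lra].
    apply Rmult_lt_compat_r; auto; apply Rinv_0_lt_compat; auto.
  - rewrite plus_INR; field; lra.
Qed.

Lemma nat_above x : exists N : nat, x < INR N.
Proof.
  destruct (archimed x) as [h1 h2]; destruct (Z_le_gt_dec 0 (up x)).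
  - exists (Z.to_nat (up x)); rewrite INR_IZR_INZ, Z2Nat.id; auto.
  - exists O; apply Z.gt_lt, IZR_lt in g; simpl in *; lra.
Qed.

Lemma ratio_between x y : 0 <= x < y ->
  exists n k : nat, (0 < n)%nat /\ x < INR k / INR n < y.
Proof.
  intros hxy; destruct (nat_above (/ (y - x))) as [N hN].
  set (n := S N); assert (0 < INR n) as hn by (apply lt_0_INR; lia).
  assert (1 < INR n * (y - x)) as big.
  { unfold n; rewrite S_INR; apply (Rmult_lt_reg_l (/ (y - x))); [apply Rinv_0_lt_compat; lra |].
    replace (/ (y - x) * ((INR N + 1) * (y - x))) with (INR N + 1) by (field; lra); lra. }
  destruct (archimed (x * INR n)) as [u1 u2].
  assert (0 <= x * INR n) by (apply Rmult_le_pos; lra).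
  assert (0 < up (x * INR n))%Z by (apply lt_IZR; lra).
  exists n, (Z.to_nat (up (x * INR n))); split; [lia |].
  rewrite INR_IZR_INZ, Z2Nat.id by lia.
  split; apply (Rmult_lt_reg_r (INR n)); auto; unfold Rdiv; rewrite Rmult_assoc, Rinv_l by lra; nra.
Qed.

Lemma Un_cv_of_dist_le_inv (u : nat -> R) w :
  (forall m, Rabs (u m - w) <= / INR (S m)) -> Un_cv u w.
Proof.
  intros hb eps he; destruct (nat_above (/ eps)) as [N hN]; exists N; intros m hm.
  assert (INR N <= INR m) by (apply le_INR; lia).
  assert (/ INR (S m) < eps).
  { rewrite S_INR; apply (Rmult_lt_reg_l (INR m + 1)); [pose proof (pos_INR m); lra |].
    rewrite Rinv_r by (pose proof (pos_INR m); lra).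
    apply (Rmult_lt_reg_l (/ eps)); [apply Rinv_0_lt_compat; lra |].
    replace (/ eps * ((INR m + 1) * eps)) with (INR m + 1) by (field; lra); lra. }
  unfold Rdist; pose proof (hb m); lra.
Qed.

Lemma wf_fin_set_le_half V E r : wf_fin_set V E r -> r <= 1 / 2.
Proof.
  intros (n & k & hkn & -> & _); assert (0 < INR n) by (apply lt_0_INR; lia).
  assert (INR (2 * k) < INR n) as h by (apply lt_INR; auto); rewrite mult_INR in h; simpl in h.
  apply (Rmult_le_reg_r (INR n)); auto; unfold Rdiv; rewrite Rmult_assoc, Rinv_l by lra; lra.
Qed.

Lemma is_wf_fin_ge V E r : wf_fin_set V E r -> exists w, is_wf_fin V E w /\ r <= w.
Proof.
  intros h; destruct (completeness (wf_fin_set V E)) as [w hw].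
  - exists (1 / 2); intros x hx; apply (wf_fin_set_le_half V E); auto.
  - eauto.
  - exists w; split; auto; apply (is_lub_ub _ _ _ hw h).
Qed.
(** * Walks in a cyclic graph *)

Section CyclicGraph.

Variables (V : R -> Prop) (E : R -> R -> Prop).
Hypothesis cyc : is_cyclic V E.

Lemma vertex_in_S1 x : V x -> in_S1 x.
Proof. destruct cyc as [[h _] _]; auto. Qed.

Lemma edge_antisym u w : E u w -> E w u -> False.
Proof. destruct cyc as [[_ [_ [_ h]]] _]; exact (h u w). Qed.

Lemma edge_split a b c : E a c -> V b -> scyc a b c -> E a b /\ E b c.
Proof. destruct cyc as [_ h]; eauto. Qed.

Lemma cwd_vertex_bounds x y : V x -> V y -> 0 <= cwd x y < 1.
Proof. intros; apply cwd_bounds; apply vertex_in_S1; auto. Qed.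

Definition move (y z : R) : Prop := z = y \/ E y z.

Inductive walk (x : R) : nat -> R -> R -> Prop :=
| walk_nil : walk x 0 x 0
| walk_snoc m y L z : walk x m y L -> V z -> move y z -> walk x (S m) z (L + cwd y z).

Lemma walk_nil' x y L : y = x -> L = 0 -> walk x 0 y L.
Proof. intros -> ->; constructor. Qed.

Lemma walk_snoc' x m y L z L' :
  walk x m y L -> V z -> move y z -> L' = L + cwd y z -> walk x (S m) z L'.
Proof. intros; subst; econstructor; eauto. Qed.

Lemma walk_vertex x m y L : V x -> walk x m y L -> V y.
Proof. intros hx h; induction h; auto. Qed.

Lemma walk_lift x m y L : walk x m y L -> is_lift y (x + L).
Proof.
  intros h; induction h.
  - rewrite Rplus_0_r; apply is_lift_refl.
  - rewrite <- Rplus_assoc; apply is_lift_add_cwd; auto.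
Qed.

Lemma walk_length_bounds x m y L : V x -> walk x m y L -> 0 <= L <= INR m.
Proof.
  intros hx h; induction h; [simpl; lra |].
  pose proof (cwd_vertex_bounds y z (walk_vertex _ _ _ _ hx h) H).
  rewrite S_INR; lra.
Qed.

Lemma walk_stay x m y L : walk x m y L -> V y -> walk x (S m) y L.
Proof. intros; eapply walk_snoc'; eauto; [left | rewrite cwd_xx]; auto; ring. Qed.

Lemma walk_const x m : V x -> walk x m x 0.
Proof. intros hx; induction m; [constructor | apply walk_stay; auto]. Qed.

Lemma walk_app x m y L1 n z L2 :
  walk x m y L1 -> walk y n z L2 -> walk x (m + n) z (L1 + L2).
Proof.
  intros h1 h2; induction h2.
  - rewrite Nat.add_0_r, Rplus_0_r; auto.
  - rewrite Nat.add_succ_r; eapply walk_snoc'; eauto; ring.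
Qed.

Lemma walk_split x m n z L : walk x (m + n) z L ->
  exists y L1 L2, walk x m y L1 /\ walk y n z L2 /\ L = L1 + L2.
Proof.
  revert z L; induction n; intros z L h.
  - rewrite Nat.add_0_r in h; exists z, L, 0; repeat split; auto; [constructor | ring].
  - rewrite Nat.add_succ_r in h; inversion h; subst.
    destruct (IHn _ _ H0) as (y' & L1 & L2 & h1 & h2 & ->).
    exists y', L1, (L2 + cwd y z); repeat split; auto; [econstructor; eauto | ring].
Qed.

(* A follower at lifted position Q, less than one turn behind a leader at lifted
   position P, keeps that lag when the leader moves: it stays put unless the gap
   would reach one turn, and in that case cyclicity gives it an edge to the
   leader's new position. *)
Lemma follow_move y z y' P Q :
  V y -> V z -> V y' -> move y z -> is_lift y P -> is_lift y' Q -> P - 1 <= Q <= P ->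
  exists z', V z' /\ move y' z' /\
    P + cwd y z - 1 <= Q + cwd y' z' <= P + cwd y z.
Proof.
  intros hy hz hy' yz hP hQ hPQ.
  pose proof (vertex_in_S1 y hy) as Sy; pose proof (vertex_in_S1 z hz) as Sz.
  pose proof (vertex_in_S1 y' hy') as Sy'.
  pose proof (cwd_bounds y z Sy Sz) as dyz.
  destruct (Req_dec y' y) as [-> | ne].
  { exists z; repeat split; auto; lra. }
  assert (P - 1 < Q < P) as lag.
  { destruct (Req_dec P (Q + 1)).
    { exfalso; apply ne; apply (eq_of_lifts_succ y' y Q P); auto. }
    destruct (Req_dec Q P).
    { exfalso; apply ne; symmetry; apply (eq_of_lifts_eq y y' P Q); auto. }
    lra. }
  destruct (Rle_lt_dec (P + cwd y z - 1) Q) as [stay | jump].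
  { exists y'; split; [auto | split; [left; auto | rewrite cwd_xx; lra]]. }
  assert (E y z) as ezy.
  { destruct yz as [e | e]; auto; subst z; rewrite cwd_xx in jump; lra. }
  assert (is_lift y' (Q + 1)) as hQ1 by (replace (Q + 1) with (Q + IZR 1) by (simpl; ring); apply is_lift_addZ; auto).
  assert (is_lift z (P + cwd y z)) as hz' by (apply is_lift_add_cwd; auto).
  assert (scyc y y' z) as sc.
  { apply (scyc_of_lifts y y' z P (Q + 1) (P + cwd y z)); auto; lra. }
  destruct (edge_split _ _ _ ezy hy' sc) as [_ ey'z].
  exists z; split; [auto | split; [right; auto |]].
  rewrite (cwd_of_lifts y' z (Q + 1) (P + cwd y z)); auto; lra.
Qed.

Lemma walk_follow u v m y L : V u -> V v -> walk u m y L ->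
  exists z L', walk v m z L' /\ (u + L) - 1 <= (u - cwd v u) + L' <= u + L.
Proof.
  intros hu hv h; induction h.
  - exists v, 0; split; [constructor |].
    pose proof (cwd_vertex_bounds v u hv hu); lra.
  - destruct IHh as (z' & L' & hw & lag).
    assert (is_lift z' ((u - cwd v u) + L')) as hQ.
    { destruct (cwd_cases v u) as [[_ ->] | [_ ->]].
      - replace (u - (u - v) + L') with (v + L') by ring; apply (walk_lift _ _ _ _ hw).
      - replace (u - (u - v + 1) + L') with ((v + L') + IZR (-1)) by (simpl; ring).
        apply is_lift_addZ, (walk_lift _ _ _ _ hw). }
    destruct (follow_move y z z' (u + L) (u - cwd v u + L') (walk_vertex _ _ _ _ hu h) H
                (walk_vertex _ _ _ _ hv hw) H0 (walk_lift _ _ _ _ h) hQ lag)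
      as (z'' & hz'' & mv & lag').
    exists z'', (L' + cwd z' z''); split; [econstructor; eauto | lra].
Qed.

Lemma walk_chase u v m y L : V u -> V v -> walk u m y L ->
  exists z L', walk v m z L' /\ L - 1 <= L'.
Proof.
  intros hu hv h; destruct (walk_follow u v m y L hu hv h) as (z & L' & h' & lag).
  exists z, L'; split; auto; pose proof (cwd_vertex_bounds v u hv hu); lra.
Qed.

(* Two consecutive moves never make a full turn: otherwise the second edge would
   pass over its predecessor's tail, and cyclicity would give an edge opposite to
   the first one. *)
Lemma cwd_two_moves_lt1 y z z' : V y -> V z -> V z' -> move y z -> move z z' ->
  cwd y z + cwd z z' < 1.
Proof.
  intros hy hz hz' s1 s2.
  assert (in_S1 y) as Sy by (apply vertex_in_S1; auto).
  assert (in_S1 z) as Sz by (apply vertex_in_S1; auto).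
  assert (in_S1 z') as Sz' by (apply vertex_in_S1; auto).
  pose proof (cwd_bounds y z Sy Sz); pose proof (cwd_bounds z z' Sz Sz').
  destruct s1 as [-> | e1]; [rewrite cwd_xx; lra |].
  destruct s2 as [-> | e2]; [rewrite cwd_xx; lra |].
  destruct (Rlt_le_dec (cwd y z + cwd z z') 1) as [| wrap]; auto; exfalso.
  set (P := y + cwd y z); set (P' := P + cwd z z').
  assert (is_lift z P) as lz by (apply is_lift_add_cwd, is_lift_refl).
  assert (is_lift z' P') as lz' by (apply is_lift_add_cwd; auto).
  assert (is_lift y (y + 1)) as ly
    by (replace (y + 1) with (y + IZR 1) by (simpl; ring); apply is_lift_addZ, is_lift_refl).
  destruct (Req_dec P' (y + 1)).
  - assert (z' = y) as -> by (symmetry; apply (eq_of_lifts_eq y z' (y + 1) P'); auto).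
    eapply edge_antisym; eauto.
  - assert (scyc z y z') as sc
      by (apply (scyc_of_lifts z y z' P (y + 1) P'); auto; unfold P', P in *; lra).
    destruct (edge_split _ _ _ e2 hy sc) as [e3 _]; eapply edge_antisym; eauto.
Qed.

Lemma walk_length_half x m y L : V x -> walk x m y L -> 2 * L <= INR m + 1.
Proof.
  intros hx h.
  assert (forall y', V y' -> move y y' -> 2 * L + cwd y y' <= INR m + 1) as strong.
  { induction h; intros y' hy' s.
    - simpl; pose proof (cwd_vertex_bounds x y' hx hy'); lra.
    - pose proof (IHh z H H0).
      pose proof (cwd_two_moves_lt1 y z y' (walk_vertex _ _ _ _ hx h) H hy' H0 s).
      rewrite S_INR; lra. }
  pose proof (strong y (walk_vertex _ _ _ _ hx h) (or_introl eq_refl)).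
  rewrite cwd_xx in *; lra.
Qed.

Definition seq_walk (c : nat -> R) (M : nat) : Prop :=
  forall i, (i < M)%nat -> V (c (S i)) /\ move (c i) (c (S i)).

Lemma seq_walk_vertex c M a : V (c O) -> seq_walk c M -> (a <= M)%nat -> V (c a).
Proof. intros h0 hw ha; destruct a; auto; apply (hw a); lia. Qed.

Lemma seq_walk_segment c M a b : seq_walk c M -> (a + b <= M)%nat ->
  walk (c a) b (c (a + b)%nat) (unwind c (a + b) - unwind c a).
Proof.
  intros hw; induction b; intros hb.
  - apply walk_nil'; rewrite Nat.add_0_r; auto; ring.
  - rewrite Nat.add_succ_r; destruct (hw (a + b)%nat ltac:(lia)) as [h1 h2].
    eapply walk_snoc'; [apply IHb; lia | auto | auto | rewrite unwind_S; ring].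
Qed.

Lemma walk_seq x m y L : walk x m y L ->
  exists c, c O = x /\ c m = y /\ seq_walk c m /\ L = unwind c m - unwind c O.
Proof.
  intros h; induction h.
  - exists (fun _ => x); split; [auto | split; [auto | split]].
    + intros i hi; lia.
    + unfold unwind; simpl; ring.
  - destruct IHh as (c & h0 & hm & hw & hL).
    set (c' := fun i => if Nat.eqb i (S m) then z else c i).
    assert (agree : forall i, (i <= m)%nat -> c' i = c i)
      by (intros i hi; unfold c'; replace (Nat.eqb i (S m)) with false; auto;
          symmetry; apply Nat.eqb_neq; lia).
    assert (last : c' (S m) = z) by (unfold c'; rewrite Nat.eqb_refl; auto).
    assert (same_unwind : forall i, (i <= m)%nat -> unwind c' i = unwind c i).
    { induction i as [| i IHi]; intros hi; [unfold unwind; simpl; rewrite agree; auto; lia |].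
      rewrite !unwind_S, IHi, !agree by lia; auto. }
    exists c'; split; [rewrite agree; auto; lia | split; [auto | split]].
    + intros i hi; destruct (Nat.eq_dec i m) as [-> | ne].
      * rewrite last, agree, hm by lia; auto.
      * rewrite !agree by lia; apply hw; lia.
    + rewrite unwind_S, last, !same_unwind, agree, hm, hL by lia; ring.
Qed.

Lemma walk_len_set_iff m x r : walk_len_set V E m x r <-> exists y, walk x m y r.
Proof.
  split.
  - intros (c & h0 & hw & ->); exists (c m).
    pose proof (seq_walk_segment c m 0 m hw ltac:(lia)) as h; simpl in h; rewrite h0 in h.
    replace (rsum (fun i => cwd (c i) (c (S i))) m) with (unwind c m - unwind c O)
      by (unfold unwind; simpl; ring); auto.
  - intros (y & h); destruct (walk_seq _ _ _ _ h) as (c & h0 & _ & hw & ->).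
    exists c; split; [auto | split; [auto | unfold unwind; simpl; ring]].
Qed.

(** * From homomorphisms C_n^k -> G to long walks *)

Section WindingSequence.

Variables (h : nat -> R) (n k : nat).
Hypotheses (k_pos : (1 <= k)%nat) (n_pos : (0 < n)%nat).
Hypothesis h_vertex : forall i, V (h i).
Hypothesis h_period : forall i, h (i + n)%nat = h i.
Hypothesis h_moves : forall j s, (1 <= s <= k)%nat -> move (h j) (h (j + s)%nat).
Hypothesis h_nonconst : exists i, h i <> h O.

Lemma unwind_mono i j : (i <= j)%nat -> unwind h i <= unwind h j.
Proof.
  intros hij; induction hij; [lra |].
  rewrite unwind_S; pose proof (cwd_vertex_bounds _ _ (h_vertex m) (h_vertex (S m))); lra.
Qed.

Lemma unwind_period N i :
  unwind h (i + N * n) = unwind h i + INR N * (unwind h n - unwind h O).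
Proof.
  assert (one : forall i, unwind h (i + n) - unwind h i = unwind h n - unwind h O).
  { induction i0 as [| i0 IH]; [simpl; ring |].
    replace (S i0 + n)%nat with (S (i0 + n)) by lia; rewrite !unwind_S.
    replace (S (i0 + n)) with (S i0 + n)%nat by lia; rewrite !h_period; lra. }
  revert i; induction N; intros i; [simpl; rewrite Nat.add_0_r; ring |].
  replace (i + S N * n)%nat with ((i + N * n) + n)%nat by lia.
  pose proof (one (i + N * n)%nat); rewrite S_INR, IHN in *; lra.
Qed.

Lemma winding_ge1 : 1 <= unwind h n - unwind h O.
Proof.
  destruct (unwind_lift h n) as [z hz].
  assert (unwind h n - unwind h O = IZR z) as ez.
  { rewrite hz; replace n with (0 + n)%nat at 1 by lia; rewrite h_period; unfold unwind; simpl; ring. }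
  pose proof (unwind_mono O n ltac:(lia)) as D0.
  assert (z <> 0%Z).
  { intros ->; destruct h_nonconst as [i hi]; apply hi.
    assert (unwind h i = unwind h O).
    { apply Rle_antisym; [| apply unwind_mono; lia].
      pose proof (unwind_mono i (0 + i * n) ltac:(nia)); rewrite unwind_period in *; simpl in ez; nra. }
    symmetry; apply (eq_of_lifts_eq (h O) (h i) (unwind h O) (unwind h i));
      auto using vertex_in_S1, unwind_lift. }
  assert (0 <= IZR z) as z0 by lra.
  rewrite ez; apply le_IZR in z0; apply IZR_le; lia.
Qed.

(* If the unwound span from i first reached a full turn at i + s + 1 with s < k,
   then h (i + s + 1) would lie on the chord h i -> h (i + s), and cyclicity would
   give an edge opposite to h (i + s) -> h (i + s + 1). *)
Lemma unwind_span_lt1 i s : (s <= k)%nat -> unwind h (i + s) - unwind h i < 1.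
Proof.
  induction s; intros hs; [rewrite Nat.add_0_r; lra |].
  specialize (IHs ltac:(lia)).
  destruct (Rlt_le_dec (unwind h (i + S s)) (unwind h i + 1)) as [| wrap]; [lra | exfalso].
  set (A := unwind h i) in *; set (C := unwind h (i + s)) in *; set (B := unwind h (i + S s)) in *.
  assert (B - C < 1) as BC.
  { unfold B, C; rewrite Nat.add_succ_r, unwind_S.
    pose proof (cwd_vertex_bounds _ _ (h_vertex (i + s)) (h_vertex (S (i + s)))); lra. }
  assert (A <= C) as CA by (apply unwind_mono; lia).
  pose proof (vertex_in_S1 _ (h_vertex i)) as Si.
  pose proof (vertex_in_S1 _ (h_vertex (i + s))) as Sis.
  pose proof (vertex_in_S1 _ (h_vertex (i + S s))) as SiSs.
  assert (is_lift (h i) A) as lA by apply unwind_lift.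
  assert (is_lift (h (i + s)%nat) C) as lC by apply unwind_lift.
  assert (is_lift (h (i + S s)%nat) B) as lB by apply unwind_lift.
  assert (A < C) as AC by (destruct (Req_dec C A); lra).
  assert (1 <= s)%nat as s1.
  { destruct s; [unfold C, A in AC; rewrite Nat.add_0_r in AC; lra | lia]. }
  assert (E (h i) (h (i + s)%nat)) as e1.
  { destruct (h_moves i s ltac:(lia)) as [e | e]; auto.
    exfalso; apply (neq_of_lifts (h i) (h (i + s)%nat) A C); auto; lra. }
  assert (E (h (i + s)%nat) (h (i + S s)%nat)) as e2.
  { destruct (h_moves (i + s)%nat 1 ltac:(lia)) as [e | e];
      replace (i + s + 1)%nat with (i + S s)%nat in e by lia; auto.
    exfalso; apply (neq_of_lifts (h (i + s)%nat) (h (i + S s)%nat) C B); auto; lra. }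
  destruct (Req_dec B (A + 1)) as [eB | nB].
  - rewrite <- (eq_of_lifts_succ (h i) _ A B Si SiSs lA lB eB) in e2; eapply edge_antisym; eauto.
  - assert (is_lift (h (i + S s)%nat) (B - 1)) as lB'
      by (replace (B - 1) with (B + IZR (-1)) by (simpl; ring); apply is_lift_addZ; auto).
    assert (scyc (h i) (h (i + S s)%nat) (h (i + s)%nat)) as sc
      by (apply (scyc_of_lifts _ _ _ A (B - 1) C); auto; lra).
    destruct (edge_split _ _ _ e1 (h_vertex _) sc) as [_ e3]; eapply edge_antisym; eauto.
Qed.

Lemma walk_by_jumps t : walk (h O) t (h (t * k)%nat) (unwind h (t * k) - unwind h O).
Proof.
  induction t; [apply walk_nil'; auto; simpl; ring |].
  replace (S t * k)%nat with (t * k + k)%nat by lia.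
  eapply walk_snoc'; [apply IHt | auto | apply h_moves; lia |].
  rewrite (cwd_of_lifts _ _ (unwind h (t * k)) (unwind h (t * k + k)));
    auto using vertex_in_S1, unwind_lift; [ring |].
  split; [pose proof (unwind_mono (t * k) (t * k + k) ltac:(lia)); lra | apply unwind_span_lt1; lia].
Qed.

Lemma winding_walk q : exists y L, walk (h O) (q * n) y L /\ INR (q * k) <= L.
Proof.
  exists (h (q * n * k)%nat), (unwind h (q * n * k) - unwind h O); split; [apply walk_by_jumps |].
  replace (q * n * k)%nat with (0 + (q * k) * n)%nat by lia.
  rewrite unwind_period; pose proof winding_ge1; pose proof (pos_INR (q * k)); simpl; nra.
Qed.

End WindingSequence.

Lemma hom_winding_walk W n k f : (1 <= k)%nat -> (0 < n)%nat ->
  cyclic_hom (CV n) (CE n k) (ind_V V W) (ind_E E W) f ->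
  forall q, exists u y L, V u /\ walk u (q * n) y L /\ INR (q * k) <= L.
Proof.
  intros hk hn (f_vertex & f_edge & _ & f_nonconst) q.
  set (h := fun i => f (INR (i mod n) / INR n)).
  assert (forall i, V (h i)) as h_vertex by (intros i; apply f_vertex, grid_point_CV; auto).
  assert (forall i, h (i + n)%nat = h i) as h_period
    by (intros; unfold h; rewrite mod_add_same; auto).
  assert (forall j s, (1 <= s <= k)%nat -> move (h j) (h (j + s)%nat)) as h_moves.
  { intros j s hs; unfold h, move; rewrite <- (Nat.Div0.add_mod_idemp_l j s n).
    destruct (f_edge (INR (j mod n) / INR n) (INR ((j mod n + s) mod n) / INR n)) as [e | [e _]];
      auto.
    exists (j mod n)%nat, s; split; [apply Nat.mod_upper_bound; lia | auto]. }
  assert (exists i, h i <> h O) as h_nonconst.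
  { destruct (f_nonconst (C_has_dicycle n k hk hn))
      as (x & y & [i [hi ->]] & [j [hj ->]] & ne).
    assert (h i = f (INR i / INR n)) by (unfold h; rewrite Nat.mod_small; auto).
    assert (h j = f (INR j / INR n)) by (unfold h; rewrite Nat.mod_small; auto).
    destruct (Req_dec (h i) (h O)); [exists j | exists i]; congruence. }
  destruct (winding_walk h n k hk hn h_vertex h_period h_moves h_nonconst q) as (y & L & hw & hL).
  exists (h O), y, L; auto.
Qed.

(** * From long walks to homomorphisms C_n^k -> G *)

Section GreedyHomomorphism.

Variables (c : nat -> R) (M n k : nat) (r0 C : R).
Hypotheses (c_start : V (c O)) (c_walk : seq_walk c M) (kn : (2 * k < n)%nat).
Hypothesis c_linear : forall a, (a <= M)%nat -> INR a * r0 - C <= unwind c a - unwind c O.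
Hypothesis long : C + 1 < INR M * (r0 - INR k / INR n).

(* [front j] is the lowest of the lifted positions of the walk at times a <= M,
   each lowered by floor((a k - j) / n) turns.  It is nondecreasing in j, gains
   one turn when j grows by n, and advances by at most one step of the walk when
   j grows by k; hence j |-> front j mod 1 is a homomorphism from C_n^k. *)
Definition lowered (a j : nat) : R :=
  unwind c a - IZR ((Z.of_nat (a * k) - Z.of_nat j) / Z.of_nat n).

Definition front (j : nat) : R := min_upto (fun a => lowered a j) M.

Definition greedy_vertex (j : nat) : R := frac (front j).

Lemma c_vertex a : (a <= M)%nat -> V (c a).
Proof. apply seq_walk_vertex; auto. Qed.

Lemma lowered_lift a j : is_lift (c a) (lowered a j).
Proof. unfold lowered, Rminus; rewrite <- opp_IZR; apply is_lift_addZ, unwind_lift. Qed.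

Lemma lowered_start_lt_end j : lowered O j < lowered M j.
Proof.
  assert (0 < INR n) by (apply lt_0_INR; lia).
  pose proof (Zdiv_bounds (Z.of_nat (M * k) - Z.of_nat j) n ltac:(lia)) as [low _].
  pose proof (Zdiv_bounds (Z.of_nat (0 * k) - Z.of_nat j) n ltac:(lia)) as [_ up].
  replace (Z.of_nat (0 * k) - Z.of_nat j)%Z with (- Z.of_nat j)%Z in * by lia.
  rewrite minus_IZR, <- !INR_IZR_INZ in low; rewrite opp_IZR, <- INR_IZR_INZ in up.
  pose proof (c_linear M (le_n M)); rewrite mult_INR in low.
  unfold lowered; replace (Z.of_nat (0 * k) - Z.of_nat j)%Z with (- Z.of_nat j)%Z by lia.
  replace ((INR M * INR k - INR j) / INR n) with (INR M * (INR k / INR n) - INR j / INR n)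
    in low by (field; lra).
  replace (- INR j / INR n) with (- (INR j / INR n)) in up by (field; lra).
  nra.
Qed.

Lemma front_attained j : exists a, (a < M)%nat /\ front j = lowered a j.
Proof.
  destruct (min_upto_attained (fun a => lowered a j) M) as (a & ha & e).
  exists a; split; auto; destruct (Nat.eq_dec a M) as [-> | ]; [| lia].
  pose proof (min_upto_le (fun a => lowered a j) M O ltac:(lia)).
  pose proof (lowered_start_lt_end j); unfold front in *; lra.
Qed.

Lemma front_mono j j' : (j <= j')%nat -> front j <= front j'.
Proof.
  intros hj; induction hj; [lra |]; eapply Rle_trans; [apply IHhj |].
  apply min_upto_mono; intros a; unfold lowered.
  apply Rplus_le_compat_l, Ropp_le_contravar, IZR_le, Z.div_le_mono; lia.
Qed.

Lemma front_period j : front (j + n) = front j + 1.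
Proof.
  apply min_upto_succ; intros a; unfold lowered.
  replace (Z.of_nat (a * k) - Z.of_nat (j + n))%Z
    with ((Z.of_nat (a * k) - Z.of_nat j) + (-1) * Z.of_nat n)%Z by lia.
  rewrite Z.div_add by lia; rewrite plus_IZR; simpl; ring.
Qed.

Lemma front_step j a : front j = lowered a j -> (a < M)%nat ->
  front (j + k) <= front j + cwd (c a) (c (S a)).
Proof.
  intros e ha; rewrite e.
  eapply Rle_trans; [apply (min_upto_le (fun a => lowered a (j + k)) M (S a)); lia |].
  unfold lowered; rewrite unwind_S.
  replace (Z.of_nat (S a * k) - Z.of_nat (j + k))%Z with (Z.of_nat (a * k) - Z.of_nat j)%Z by lia.
  lra.
Qed.

Lemma greedy_vertex_spec j :
  exists a, (a < M)%nat /\ front j = lowered a j /\ greedy_vertex j = c a.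
Proof.
  destruct (front_attained j) as (a & ha & e); exists a; repeat split; auto.
  unfold greedy_vertex; rewrite e; apply frac_of_lift;
    [apply vertex_in_S1, c_vertex; lia | apply lowered_lift].
Qed.

Lemma greedy_vertex_in_V j : V (greedy_vertex j).
Proof. destruct (greedy_vertex_spec j) as (a & ha & _ & ->); apply c_vertex; lia. Qed.

Lemma greedy_vertex_lift j : is_lift (greedy_vertex j) (front j).
Proof. destruct (greedy_vertex_spec j) as (a & ha & -> & ->); apply lowered_lift. Qed.

Lemma greedy_vertex_mod j : greedy_vertex (j mod n) = greedy_vertex j.
Proof.
  assert (per : forall N j, greedy_vertex (j + N * n) = greedy_vertex j).
  { induction N; intros j'; [rewrite Nat.add_0_r; auto |].
    replace (j' + S N * n)%nat with ((j' + N * n) + n)%nat by lia.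
    rewrite <- (IHN j'); unfold greedy_vertex at 1.
    apply frac_of_lift; [apply vertex_in_S1, greedy_vertex_in_V |].
    rewrite front_period; replace (front (j' + N * n) + 1) with (front (j' + N * n) + IZR 1)
      by (simpl; ring); apply is_lift_addZ, greedy_vertex_lift. }
  rewrite (Nat.div_mod_eq j n) at 2.
  replace (n * (j / n) + j mod n)%nat with (j mod n + (j / n) * n)%nat by lia; auto.
Qed.

Lemma greedy_vertex_move j s : (1 <= s <= k)%nat ->
  move (greedy_vertex j) (greedy_vertex (j + s)).
Proof.
  intros hs; destruct (greedy_vertex_spec j) as (a & ha & e & ev).
  pose proof (vertex_in_S1 _ (c_vertex a ltac:(lia))) as Sa.
  pose proof (vertex_in_S1 _ (c_vertex (S a) ltac:(lia))) as SSa.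
  pose proof (vertex_in_S1 _ (greedy_vertex_in_V (j + s))) as Sjs.
  set (A := front j); set (B := front (j + s)); set (P := front j + cwd (c a) (c (S a))).
  assert (A <= B) as AB by (apply front_mono; lia).
  assert (B <= P) as BP
    by (eapply Rle_trans; [apply (front_mono _ (j + k)); lia | apply front_step; auto]).
  assert (is_lift (c a) A) as lA by (unfold A; rewrite <- ev; apply greedy_vertex_lift).
  assert (is_lift (c (S a)) P) as lP by (apply is_lift_add_cwd; auto).
  assert (is_lift (greedy_vertex (j + s)) B) as lB by apply greedy_vertex_lift.
  pose proof (cwd_bounds _ _ Sa SSa).
  unfold move; rewrite ev.
  destruct (Req_dec B A) as [eBA | nBA].
  { left; symmetry; apply (eq_of_lifts_eq (c a) _ A B); auto. }
  destruct (c_walk a ha) as [_ [st | st]].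
  { exfalso; apply nBA; unfold P in BP; rewrite st, cwd_xx in BP; unfold A in *; lra. }
  right; destruct (Req_dec B P) as [eB | nB].
  { rewrite <- (eq_of_lifts_eq (c (S a)) (greedy_vertex (j + s)) P B); auto. }
  apply (edge_split _ _ _ st (greedy_vertex_in_V _)).
  apply (scyc_of_lifts _ _ _ A B P); auto; unfold A, B, P in *; lra.
Qed.

Lemma greedy_vertex_nonconst : (1 <= k)%nat ->
  exists i, (i < n)%nat /\ greedy_vertex i <> greedy_vertex O.
Proof.
  intros hk; apply NNPP; intros hne.
  assert (forall i, (i <= n)%nat -> greedy_vertex i = greedy_vertex O) as all.
  { intros i hi; destruct (Nat.eq_dec i n) as [-> | ].
    - rewrite <- greedy_vertex_mod, Nat.Div0.mod_same; auto.
    - apply NNPP; intro hh; apply hne; exists i; split; auto; lia. }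
  assert (forall i, (i <= n)%nat -> front i = front O) as flat.
  { induction i; intros hi; auto.
    rewrite <- IHi by lia; destruct (greedy_vertex_spec i) as (a & ha & e & _).
    apply (lifts_eq (greedy_vertex O)); [apply vertex_in_S1, greedy_vertex_in_V | | |].
    - rewrite <- (all i) by lia; apply greedy_vertex_lift.
    - rewrite <- (all (S i)) by lia; apply greedy_vertex_lift.
    - pose proof (front_mono i (S i) ltac:(lia)).
      pose proof (front_mono (S i) (i + k) ltac:(lia)).
      pose proof (front_step i a e ha).
      pose proof (cwd_vertex_bounds _ _ (c_vertex a ltac:(lia)) (c_vertex (S a) ltac:(lia))).
      lra. }
  pose proof (flat n (le_n n)); pose proof (front_period O); simpl in *; lra.
Qed.

Lemma greedy_vertex_wcyc i1 i2 i3 : (i1 < n)%nat -> (i2 < n)%nat -> (i3 < n)%nat ->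
  wcyc (INR i1 / INR n) (INR i2 / INR n) (INR i3 / INR n) ->
  wcyc (greedy_vertex i1) (greedy_vertex i2) (greedy_vertex i3).
Proof.
  intros h1 h2 h3 hw.
  assert (0 < INR n) as hn by (apply lt_0_INR; lia).
  assert (forall i j, INR i / INR n = INR j / INR n -> greedy_vertex i = greedy_vertex j)
    as grid_inj.
  { intros i j e; f_equal; apply INR_eq, (Rmult_eq_reg_r (/ INR n)); auto.
    apply Rinv_neq_0_compat; lra. }
  destruct hw as [e | [e | [e | sc]]];
    [left | right; left | right; right; left | ]; try (apply grid_inj; auto).
  unfold scyc in sc; rewrite !cwd_grid in sc by auto.
  set (j2 := if Nat.leb i1 i2 then i2 else (i2 + n)%nat) in *.
  set (j3 := if Nat.leb i1 i3 then i3 else (i3 + n)%nat) in *.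
  assert (greedy_vertex j2 = greedy_vertex i2) as v2
    by (unfold j2; destruct (Nat.leb i1 i2); auto; rewrite <- greedy_vertex_mod, mod_add_same,
        greedy_vertex_mod; auto).
  assert (greedy_vertex j3 = greedy_vertex i3) as v3
    by (unfold j3; destruct (Nat.leb i1 i3); auto; rewrite <- greedy_vertex_mod, mod_add_same,
        greedy_vertex_mod; auto).
  assert (j3 < i1 + n)%nat by (unfold j3; destruct (Nat.leb_spec i1 i3); lia).
  destruct sc as [s1 s2].
  assert (INR i1 < INR j2 /\ INR j2 < INR j3) as [l1 l2].
  { split; apply (Rmult_lt_reg_r (/ INR n)); try apply Rinv_0_lt_compat; auto;
      unfold Rdiv in s1, s2; nra. }
  apply INR_lt in l1; apply INR_lt in l2.
  rewrite <- v2, <- v3.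
  apply (wcyc_of_lifts _ _ _ (front i1) (front j2) (front j3));
    try apply vertex_in_S1, greedy_vertex_in_V; try apply greedy_vertex_lift;
    try (apply front_mono; lia).
  rewrite <- front_period; apply front_mono; lia.
Qed.

Lemma greedy_hom : exists W, (forall x, W x -> V x) /\ finite_set W /\
  wf_fin_set (ind_V V W) (ind_E E W) (INR k / INR n).
Proof.
  assert (0 < INR n) as hn by (apply lt_0_INR; lia).
  set (f := fun x => greedy_vertex (Z.to_nat (Int_part (x * INR n)))).
  assert (forall i, f (INR i / INR n) = greedy_vertex i) as f_grid.
  { intros i; unfold f; replace (INR i / INR n * INR n) with (INR i) by (field; lra).
    rewrite INR_IZR_INZ, Int_part_IZR, Nat2Z.id; auto. }
  set (W := fun x => exists i, (i < n)%nat /\ x = greedy_vertex i).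
  exists W; split; [intros x (i & _ & ->); apply greedy_vertex_in_V |].
  split; [exists (map greedy_vertex (seq 0 n)); intros x (i & hi & ->); apply in_map, in_seq; lia |].
  exists n, k; split; auto; split; auto; exists f; split; [| split; [| split]].
  - intros x (i & hi & ->); rewrite f_grid; split; [apply greedy_vertex_in_V | exists i; auto].
  - intros x y (i & s & hi & hs & -> & ->); rewrite !f_grid, greedy_vertex_mod.
    destruct (greedy_vertex_move i s hs) as [e | e]; [left; auto | right].
    split; auto; split; [exists i; auto |].
    exists ((i + s) mod n)%nat; rewrite greedy_vertex_mod; split; auto;
      apply Nat.mod_upper_bound; lia.
  - intros x y z (i1 & h1 & ->) (i2 & h2 & ->) (i3 & h3 & ->) hw.
    rewrite !f_grid; apply greedy_vertex_wcyc; auto.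
  - intros (cc & l & _ & _ & step).
    destruct (step O) as [_ (i & s & _ & hs & _)].
    destruct (greedy_vertex_nonconst ltac:(lia)) as (i' & hi' & ne).
    exists (INR i' / INR n), (INR 0 / INR n); split; [exists i'; auto |].
    split; [exists O; split; auto; lia | rewrite !f_grid; auto].
Qed.

End GreedyHomomorphism.

(** * The sequence gamma *)

Section WalkSupremum.

Variables (v : R) (gamma : nat -> R).
Hypothesis v_vertex : V v.
Hypothesis gamma_lub : forall m, is_lub (walk_len_set V E m v) (gamma m).

Lemma gamma_ge_walk m y L : walk v m y L -> L <= gamma m.
Proof. intros h; apply (is_lub_ub _ _ _ (gamma_lub m)), walk_len_set_iff; eauto. Qed.

Lemma gamma_approx m eps : 0 < eps -> exists y L, walk v m y L /\ gamma m - eps < L.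
Proof.
  intros he; destruct (is_lub_approx _ _ _ (gamma_lub m) he) as (x & hx & h).
  apply walk_len_set_iff in hx; destruct hx as [y hy]; eauto.
Qed.

Lemma gamma_ge0 m : 0 <= gamma m.
Proof. apply (gamma_ge_walk m v 0), walk_const; auto. Qed.

Lemma gamma_le_half m : 2 * gamma m <= INR m + 1.
Proof.
  assert (gamma m <= (INR m + 1) / 2); [| lra].
  apply (is_lub_le _ _ _ (gamma_lub m)); intros x hx.
  apply walk_len_set_iff in hx; destruct hx as [y hy].
  pose proof (walk_length_half _ _ _ _ v_vertex hy); lra.
Qed.

Lemma walk_le_gamma_succ u m y L : V u -> walk u m y L -> L <= gamma m + 1.
Proof.
  intros hu h; destruct (walk_chase _ _ _ _ _ hu v_vertex h) as (z & L' & h' & hL).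
  pose proof (gamma_ge_walk _ _ _ h'); lra.
Qed.

Lemma gamma_superadd m n : gamma m + gamma n - 1 <= gamma (m + n).
Proof.
  apply Rnot_lt_le; intro hlt.
  set (eps := (gamma m + gamma n - 1 - gamma (m + n)%nat) / 3).
  assert (0 < eps) as he by (unfold eps; lra).
  destruct (gamma_approx m eps he) as (y & L1 & h1 & e1).
  destruct (gamma_approx n eps he) as (z & L2 & h2 & e2).
  destruct (walk_chase _ _ _ _ _ v_vertex (walk_vertex _ _ _ _ v_vertex h1) h2)
    as (z' & L2' & h3 & e3).
  pose proof (gamma_ge_walk _ _ _ (walk_app _ _ _ _ _ _ _ h1 h3)).
  unfold eps in *; lra.
Qed.

Lemma gamma_subadd m n : gamma (m + n) <= gamma m + gamma n + 1.
Proof.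
  apply (is_lub_le _ _ _ (gamma_lub (m + n)%nat)); intros x hx.
  apply walk_len_set_iff in hx; destruct hx as [z hz].
  destruct (walk_split _ _ _ _ _ hz) as (y & L1 & L2 & h1 & h2 & ->).
  pose proof (gamma_ge_walk _ _ _ h1).
  pose proof (walk_le_gamma_succ _ _ _ _ (walk_vertex _ _ _ _ v_vertex h1) h2); lra.
Qed.

Lemma gamma_mul_le q N : gamma (S N * q)%nat + 1 <= INR (S N) * (gamma q + 1).
Proof.
  induction N; [simpl; rewrite Nat.add_0_r; lra |].
  replace (S (S N) * q)%nat with (q + S N * q)%nat by lia.
  pose proof (gamma_subadd q (S N * q)); rewrite (S_INR (S N)); lra.
Qed.

Lemma gamma_mul_ge q N : INR (S N) * (gamma q - 1) <= gamma (S N * q)%nat - 1.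
Proof.
  induction N; [simpl; rewrite Nat.add_0_r; lra |].
  replace (S (S N) * q)%nat with (q + S N * q)%nat by lia.
  pose proof (gamma_superadd q (S N * q)); rewrite (S_INR (S N)); lra.
Qed.

Lemma gamma_linear_lower q : (1 <= q)%nat -> 1 <= gamma q ->
  forall b, INR b * ((gamma q - 1) / INR q) - (gamma q - 1) <= gamma b.
Proof.
  intros hq hr b.
  assert (0 < INR q) as hq' by (apply lt_0_INR; lia).
  set (r := (gamma q - 1) / INR q).
  assert (gamma q - 1 = INR q * r) as er by (unfold r; field; lra).
  assert (0 <= r) by (unfold r; apply Rmult_le_pos; [lra | left; apply Rinv_0_lt_compat; auto]).
  rewrite er; pose proof (Nat.div_mod_eq b q) as eb.
  pose proof (Nat.mod_upper_bound b q ltac:(lia)).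
  destruct (b / q)%nat as [| N] eqn:eN.
  - pose proof (gamma_ge0 b); assert (INR b <= INR q) by (apply le_INR; lia); nra.
  - pose proof (gamma_mul_ge q N).
    pose proof (gamma_superadd (S N * q) (b mod q)).
    replace (S N * q + b mod q)%nat with b in * by lia.
    pose proof (gamma_ge0 (b mod q)).
    assert (INR b <= INR (S N) * INR q + INR q)
      by (rewrite <- mult_INR, <- plus_INR; apply le_INR; lia).
    nra.
Qed.

Lemma wf_fin_le_gamma W r q : wf_fin_set (ind_V V W) (ind_E E W) r -> (1 <= q)%nat ->
  r <= (gamma q + 1) / INR q.
Proof.
  intros (n & k & hkn & -> & f & hf) hq.
  assert (0 < INR q) by (apply lt_0_INR; lia).
  assert (0 < INR n) by (apply lt_0_INR; lia).
  pose proof (gamma_ge0 q).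
  destruct k as [| k'].
  { simpl; unfold Rdiv; rewrite Rmult_0_l.
    apply Rmult_le_pos; [lra | left; apply Rinv_0_lt_compat; auto]. }
  destruct (hom_winding_walk W n (S k') f ltac:(lia) ltac:(lia) hf q)
    as (u & y & L & hu & hw & hL).
  pose proof (walk_le_gamma_succ u _ _ _ hu hw).
  destruct n as [| n']; [lia |].
  pose proof (gamma_mul_le q n'); replace (S n' * q)%nat with (q * S n')%nat in * by lia.
  rewrite mult_INR in hL.
  apply (Rmult_le_reg_r (INR (S n') * INR q)); [nra |].
  replace (INR (S k') / INR (S n') * (INR (S n') * INR q)) with (INR q * INR (S k'))
    by (field; lra).
  replace ((gamma q + 1) / INR q * (INR (S n') * INR q)) with (INR (S n') * (gamma q + 1))
    by (field; lra).
  lra.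
Qed.

(* A walk of length M close to gamma M has, at every time b, advanced at least
   b (gamma q - 1) / q - (gamma q + 3); the greedy construction turns it into a
   homomorphism from C_n^k whenever k/n is below that slope. *)
Lemma gamma_slope_hom q n k : (1 <= q)%nat -> (2 * k < n)%nat ->
  INR k / INR n < (gamma q - 1) / INR q ->
  exists W, (forall x, W x -> V x) /\ finite_set W /\
    wf_fin_set (ind_V V W) (ind_E E W) (INR k / INR n).
Proof.
  intros hq hkn hk.
  assert (0 < INR q) by (apply lt_0_INR; lia).
  assert (0 < INR n) by (apply lt_0_INR; lia).
  set (r := (gamma q - 1) / INR q) in *.
  assert (0 <= INR k / INR n)
    by (apply Rmult_le_pos; [apply pos_INR | left; apply Rinv_0_lt_compat; auto]).
  assert (1 <= gamma q) as g1.
  { assert (0 < r) as hr by lra; unfold r in hr.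
    apply (Rmult_lt_compat_r (INR q)) in hr; auto; unfold Rdiv in hr.
    rewrite Rmult_assoc, Rinv_l in hr by lra; lra. }
  set (C := gamma q + 3).
  destruct (nat_above ((C + 1) / (r - INR k / INR n))) as [M hM].
  assert (C + 1 < INR M * (r - INR k / INR n)) as long.
  { apply (Rmult_lt_compat_r (r - INR k / INR n)) in hM; [| lra].
    unfold Rdiv in hM; rewrite Rmult_assoc, Rinv_l in hM by lra; lra. }
  destruct (is_lub_approx _ _ 1 (gamma_lub M) ltac:(lra)) as (x & (c & c0 & cw & ->) & near).
  replace (rsum (fun i => cwd (c i) (c (S i))) M) with (unwind c M - unwind c O)
    in near by (unfold unwind; simpl; ring).
  apply (greedy_hom c M n k r C); auto; [rewrite c0; auto |].
  intros b hb.
  pose proof (seq_walk_segment c M b (M - b) cw ltac:(lia)) as seg.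
  pose proof (gamma_superadd b (M - b)).
  replace (b + (M - b))%nat with M in * by lia.
  pose proof (walk_le_gamma_succ _ _ _ _
    (seq_walk_vertex c M b ltac:(rewrite c0; auto) cw hb) seg).
  pose proof (gamma_linear_lower q hq g1 b) as lin; fold r in lin.
  unfold C; lra.
Qed.

Lemma wf_le_gamma w q : is_wf V E w -> (1 <= q)%nat -> w <= (gamma q + 1) / INR q.
Proof.
  intros hw hq; apply (is_lub_le _ _ _ hw); intros x (W & _ & _ & hx).
  apply (is_lub_le _ _ _ hx); intros y hy; apply (wf_fin_le_gamma W); auto.
Qed.

Lemma gamma_le_wf w q : is_wf V E w -> 0 <= w -> (1 <= q)%nat -> (gamma q - 1) / INR q <= w.
Proof.
  intros hw w0 hq; apply Rnot_lt_le; intros hlt.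
  assert (0 < INR q) by (apply lt_0_INR; lia).
  assert ((gamma q - 1) / INR q < 1 / 2).
  { pose proof (gamma_le_half q).
    apply (Rmult_lt_reg_r (INR q)); auto; unfold Rdiv; rewrite Rmult_assoc, Rinv_l by lra; lra. }
  destruct (ratio_between w ((gamma q - 1) / INR q)) as (n & k & hn & lo & hi); [lra |].
  assert (0 < INR n) by (apply lt_0_INR; lia).
  assert (2 * k < n)%nat as hkn.
  { apply INR_lt; rewrite mult_INR; simpl.
    assert (INR k / INR n * INR n = INR k) by (field; lra); nra. }
  destruct (gamma_slope_hom q n k hq hkn hi) as (W & hW & hfin & hel).
  destruct (is_wf_fin_ge _ _ _ hel) as (rW & hrW & le).
  pose proof (is_lub_ub _ _ _ hw (ex_intro _ W (conj hW (conj hfin hrW)))); lra.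
Qed.

End WalkSupremum.

Lemma walk_sup_exists x m : V x -> {g | is_lub (walk_len_set V E m x) g}.
Proof.
  intros hx; apply completeness.
  - exists (INR m); intros r hr; apply walk_len_set_iff in hr as [y hy].
    apply (walk_length_bounds _ _ _ _ hx hy).
  - exists 0; apply walk_len_set_iff; exists x; apply walk_const; auto.
Qed.

End CyclicGraph.

Lemma wf_exists V E v : V v -> exists w, is_wf V E w /\ 0 <= w.
Proof.
  intros hv; set (W0 := fun x => x = v).
  assert (wf_fin_set (ind_V V W0) (ind_E E W0) 0) as base.
  { exists 1%nat, O; split; [lia | split; [simpl; unfold Rdiv; ring |]].
    exists (fun _ => v); split; [| split; [| split]].
    - intros x _; split; [auto | reflexivity].
    - intros x y (i & s & _ & hs & _); lia.
    - intros; left; auto.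
    - intros (cc & l & _ & _ & step); destruct (step O) as [_ (i & s & _ & hs & _)]; lia. }
  destruct (is_wf_fin_ge _ _ _ base) as (r0 & hr0 & r0_ge).
  assert (wf_set V E r0) as hr0'.
  { exists W0; split; [intros x ->; auto | split; auto].
    exists (v :: nil); intros x ->; left; auto. }
  destruct (completeness (wf_set V E)) as [w hw].
  - exists (1 / 2); intros x (W & _ & _ & hx); apply (is_lub_le _ _ _ hx).
    intros y hy; apply (wf_fin_set_le_half _ _ _ hy).
  - eauto.
  - exists w; split; auto; pose proof (is_lub_ub _ _ _ hw hr0'); lra.
Qed.

Theorem mainTheorem8 (V : R -> Prop) (E : R -> R -> Prop) :
  is_cyclic V E ->
  forall v : R, V v ->
  exists (w : R) (gamma : nat -> R),
    is_wf V E w /\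
    (forall m : nat, (1 <= m)%nat -> is_gamma V E m v (gamma m)) /\
    Un_cv (fun m => gamma (S m) / INR (S m)) w.
Proof.
  intros cyc v hv.
  set (gamma := fun m => proj1_sig (walk_sup_exists V E cyc v m hv)).
  assert (forall m, is_lub (walk_len_set V E m v) (gamma m)) as gamma_lub
    by (intros m; apply proj2_sig).
  destruct (wf_exists V E v hv) as (w & hw & w0).
  exists w, gamma; split; [auto | split; [intros m _; apply gamma_lub |]].
  apply Un_cv_of_dist_le_inv; intros m.
  pose proof (wf_le_gamma V E cyc v gamma hv gamma_lub w (S m) hw ltac:(lia)).
  pose proof (gamma_le_wf V E cyc v gamma hv gamma_lub w (S m) hw w0 ltac:(lia)).
  unfold Rdiv in *; rewrite Rmult_plus_distr_r in *; rewrite Rmult_minus_distr_r in *.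
  apply Rabs_le; lra.
Qed.
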